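(* Let $\mathcal{C}$ be an idempotent Mal'cev clone on $\{0,1,2\}$ that contains a majority operation and preserves $\mu_2$. (1) If $\mathcal{C}$ does not preserve $\psi_2$, then $\mathcal{C}\equiv_{\mathrm{m}}\mathcal{C}_2$ or $\mathcal{C}\equiv_{\mathrm{m}}\mathcal{I}_2$. (2) If $\mathcal{C}$ preserves $\psi_2$ but not $\rho_2$, then $\mathcal{C}\equiv_{\mathrm{m}}\mathrm{Pol}(\mathbb{M}_1)$. (3) If $\mathcal{C}$ preserves both $\psi_2$ and $\rho_2$, then $\mathcal{C}\equiv_{\mathrm{m}}\mathrm{Pol}(\mathbb{M}_0)$. Furthermore, $\mathrm{Pol}(\mathbb{M}_0)\leq_{\mathrm{m}}\mathrm{Pol}(\mathbb{M}_1)\leq_{\mathrm{m}}\mathcal{C}_2\leq_{\mathrm{m}}\mathcal{I}_2$, and these four clones are pairwise not minor-equivalent.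
   Context: A clone is idempotent if $f(x,\dots,x)\approx x$ for all its operations; it is Mal'cev if it contains $d$ with $d(y,x,x)\approx d(x,x,y)\approx y$; a majority operation $m$ satisfies $m(x,y,y)\approx m(y,x,y)\approx m(y,y,x)\approx y$. $\mathrm{Pol}(\Gamma)$ is the clone of operations preserving all relations in $\Gamma$. For an $n$-ary $f$ and $\sigma\colon[n]\to[r]$, $f_\sigma(x_1,\dots,x_r)=f(x_{\sigma(1)},\dots,x_{\sigma(n)})$; a minion homomorphism is an arity-preserving map $\xi$ between clones with $\xi(f_\sigma)=\xi(f)_\sigma$. $\mathcal{C}\leq_{\mathrm{m}}\mathcal{D}$ means there is a minion homomorphism $\mathcal{C}\to\mathcal{D}$, and $\equiv_{\mathrm{m}}$ means $\leq_{\mathrm{m}}$ in both directions. Relations: $\mu_2$ is the equivalence relation on $\{0,1,2\}$ with classes $\{0,1\},\{2\}$; $\rho_2=\{0,1,2\}^2\setminus\mu_2$; $\psi_2=\{(0,1),(1,0),(2,2)\}$. Structures/clones: $\mathbb{M}_1=(\{0,1,2\};\psi_2,\mu_2,\{0\},\{1\},\{2\})$; $\mathbb{M}_0=(\{0,1,2\};\psi_2,\rho_2,\{0,1\},\{0\},\{1\},\{2\})$; $\mathcal{C}_2=\mathrm{Pol}(\{0,1\};\neq,\{0\},\{1\})$; $\mathcal{I}_2=\mathrm{Pol}(\{0,1\};\{0\},\{1\})$. *)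

From Stdlib Require Import List.
From mathcomp Require Import all_boot.
Set Implicit Arguments. Unset Strict Implicit. Unset Printing Implicit Defensive.

(* n-ary operations on a finite domain T, as finite functions on n-tuples
   (so that Leibniz equality is extensional equality). *)
Definition op (T : finType) (n : nat) := {ffun {ffun 'I_n -> T} -> T}.

Definition opset (T : finType) := forall n : nat, op T n -> Prop.

Definition proj (T : finType) (n : nat) (i : 'I_n) : op T n := [ffun x : {ffun 'I_n -> T} => x i].

Definition comp (T : finType) (n m : nat) (f : op T n) (g : 'I_n -> op T m) : op T m :=
  [ffun x : {ffun 'I_m -> T} => f [ffun i => g i x]].

Definition is_clone (T : finType) (C : opset T) : Prop :=
  (forall n (i : 'I_n), C n (proj T i)) /\
  (forall n m (f : op T n) (g : 'I_n -> op T m),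
      C n f -> (forall i, C m (g i)) -> C m (comp f g)).

Definition minor (T : finType) (n r : nat) (sigma : 'I_n -> 'I_r) (f : op T n) : op T r :=
  [ffun x : {ffun 'I_r -> T} => f [ffun i => x (sigma i)]].

Definition tup3 (T : finType) (a b c : T) : {ffun 'I_3 -> T} :=
  [ffun i : 'I_3 => nth a [:: a; b; c] i].

Definition idempotent_clone (T : finType) (C : opset T) : Prop :=
  forall n (f : op T n), C n f -> forall x : T, f [ffun _ => x] = x.

Definition malcev (T : finType) (C : opset T) : Prop :=
  exists d : op T 3, C 3 d /\
    forall x y : T, d (tup3 y x x) = y /\ d (tup3 x x y) = y.

Definition is_majority (T : finType) (m : op T 3) : Prop :=
  forall x y : T, m (tup3 x y y) = y /\ m (tup3 y x y) = y /\ m (tup3 y y x) = y.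

Definition has_majority (T : finType) (C : opset T) : Prop :=
  exists m : op T 3, C 3 m /\ is_majority m.

Record relation (T : finType) := Rel { rar : nat; rmem : pred {ffun 'I_rar -> T} }.

Definition rel1 (T : finType) (A : pred T) : relation T :=
  @Rel T 1 (fun t => A (t ord0)).
Definition rel2 (T : finType) (r : T -> T -> bool) : relation T :=
  @Rel T 2 (fun t => r (t ord0) (t (@Ordinal 2 1 isT))).

Definition preserves (T : finType) (n : nat) (f : op T n) (R : relation T) : Prop :=
  forall M : 'I_n -> {ffun 'I_(rar R) -> T},
    (forall i, @rmem T R (M i)) -> @rmem T R [ffun j : 'I_(rar R) => f [ffun i : 'I_n => M i j]].

Definition clone_preserves (T : finType) (C : opset T) (R : relation T) : Prop :=
  forall n (f : op T n), C n f -> preserves f R.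

Definition Pol (T : finType) (Gamma : list (relation T)) : opset T :=
  fun n f => forall R, In R Gamma -> preserves f R.

Definition minion_hom (A B : finType) (C : opset A) (D : opset B)
    (xi : forall n, op A n -> op B n) : Prop :=
  (forall n (f : op A n), C n f -> D n (xi n f)) /\
  (forall n r (sigma : 'I_n -> 'I_r) (f : op A n),
      C n f -> xi r (minor sigma f) = minor sigma (xi n f)).

Definition minor_le (A B : finType) (C : opset A) (D : opset B) : Prop :=
  exists xi, minion_hom C D xi.

Definition minor_eq (A B : finType) (C : opset A) (D : opset B) : Prop :=
  minor_le C D /\ minor_le D C.

Definition mu2 : relation 'I_3 :=
  rel2 (fun x y : 'I_3 => (val x == 2) == (val y == 2)).
Definition rho2 : relation 'I_3 :=
  rel2 (fun x y : 'I_3 => (val x == 2) != (val y == 2)).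
Definition psi2 : relation 'I_3 :=
  rel2 (fun x y : 'I_3 =>
    [|| (val x == 0) && (val y == 1), (val x == 1) && (val y == 0)
      | (val x == 2) && (val y == 2)]).
Definition const3 (k : nat) : relation 'I_3 := rel1 (fun x : 'I_3 => val x == k).

Definition M1 : list (relation 'I_3) :=
  [:: psi2; mu2; const3 0; const3 1; const3 2].
Definition M0 : list (relation 'I_3) :=
  [:: psi2; rho2; rel1 (fun x : 'I_3 => val x != 2); const3 0; const3 1; const3 2].

Definition const2 (k : nat) : relation 'I_2 := rel1 (fun x : 'I_2 => val x == k).
Definition C2 : opset 'I_2 :=
  Pol [:: rel2 (fun x y : 'I_2 => x != y); const2 0; const2 1].
Definition I2 : opset 'I_2 := Pol [:: const2 0; const2 1].

(* Since C has a majority operation, the Baker-Pixley theorem says that C contains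
   every operation preserving all binary relations preserved by C; since C is
   Mal'cev, these relations are rectangular. An exhaustive search over the 512
   binary relations on {0, 1, 2}, closed under converse, intersection and
   composition together with equality, the constants and mu2, confines them to an
   explicit family depending only on which of psi2, rho2 and {(0,1), (1,0)} C
   preserves. Minion homomorphisms from the reference clones into C are then
   gadgets f |-> G o f o H (pp-constructions), checked against that family by
   computation; those out of C are inclusions, the quotient by mu2 or the
   restriction to {0, 1}. The reference clones are separated by height-1
   identities: I2 has a symmetric binary operation, C2 an operation m with
   m(x,y,z) = m(y,x,z) and m(x,x,y) = x, and Pol(M1) an operation h with
   h(x,y,z,z) = h(y,x,z,z) and h(z,z,x,y) = h(z,z,y,x), while these identities
   fail in C2, Pol(M1) and Pol(M0) respectively. *)

From Pilot Require Import Defs.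
From Stdlib Require Import List ClassicalDescription Classical_Prop.
From mathcomp Require Import all_boot zify.
Set Implicit Arguments. Unset Strict Implicit. Unset Printing Implicit Defensive.

(* A binary relation on {0, ..., N-1} is the bit list of length N * N whose
   entry a * N + b records whether (a, b) belongs to it: this keeps the
   exhaustive searches below within reach of [vm_compute]. *)
Definition brel_mem (N : nat) (L : seq bool) (a b : nat) : bool := nth false L (a * N + b).

Definition brel_of (N : nat) (F : nat -> nat -> bool) : seq bool :=
  mkseq (fun i => F (i %/ N) (i %% N)) (N * N).

Lemma brel_mem_of N F a b : a < N -> b < N -> brel_mem N (brel_of N F) a b = F a b.
Proof.
move=> ha hb; rewrite /brel_mem nth_mkseq; last by nia.
have N_gt0 : 0 < N by apply: leq_ltn_trans hb.
by rewrite divnMDl // divn_small // addn0 modnMDl modn_small.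
Qed.

Lemma size_brel_of N F : size (brel_of N F) = N * N.
Proof. exact: size_mkseq. Qed.

Definition brel_full N := brel_of N (fun _ _ => true).
Definition brel_eq N := brel_of N (fun a b => a == b).
Definition brel_diag N (P : pred nat) := brel_of N (fun a b => (a == b) && P a).
Definition brel_conv N A := brel_of N (fun a b => brel_mem N A b a).
Definition brel_meet N A B := brel_of N (fun a b => brel_mem N A a b && brel_mem N B a b).
Definition brel_comp N A B :=
  brel_of N (fun a c => has (fun b => brel_mem N A a b && brel_mem N B b c) (iota 0 N)).

Inductive brel_step := Conv of nat | Meet of nat & nat | Comp of nat & nat.

(* Out-of-range indices refer to the full relation. *)
Definition apply_step N (Ls : seq (seq bool)) (s : brel_step) : seq bool :=
  let R i := nth (brel_full N) Ls i in
  match s with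
  | Conv i => brel_conv N (R i)
  | Meet i j => brel_meet N (R i) (R j)
  | Comp i j => brel_comp N (R i) (R j)
  end.

Fixpoint derive N (Ls : seq (seq bool)) (ss : seq brel_step) : seq (seq bool) :=
  if ss is s :: ss' then derive N (rcons Ls (apply_step N Ls s)) ss' else Ls.

Section Preservation.
Variable m : nat.
Local Notation N := m.+1.
Local Notation T := 'I_N.

Definition preserves_brel n (f : op T n) (L : seq bool) : Prop :=
  forall x y : {ffun 'I_n -> T},
    (forall i, brel_mem N L (x i) (y i)) -> brel_mem N L (f x) (f y).

Definition clone_preserves_brel (C : opset T) (L : seq bool) : Prop :=
  forall n (f : op T n), C n f -> preserves_brel f L.

Lemma preserves_rel1P n (f : op T n) (A : pred T) :
  preserves f (rel1 A) <-> (forall x : {ffun 'I_n -> T}, (forall i, A (x i)) -> A (f x)).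
Proof.
split=> [fA x Ax | fA M AM]; last by rewrite /= ffunE; apply: fA => i; rewrite ffunE; apply: AM.
have Mx i : @rmem _ (rel1 A) [ffun _ : 'I_1 => x i] by rewrite /= ffunE; apply: Ax.
have := fA _ Mx; rewrite /= ffunE.
by congr (A (f _)); apply/ffunP=> i; rewrite !ffunE.
Qed.

Lemma preserves_rel2P n (f : op T n) (r : rel T) :
  preserves f (rel2 r) <->
  (forall x y : {ffun 'I_n -> T}, (forall i, r (x i) (y i)) -> r (f x) (f y)).
Proof.
split=> [fr x y rxy | fr M rM]; last first.
  by rewrite /= !ffunE; apply: fr => i; rewrite !ffunE; apply: rM.
pose M i := [ffun j : 'I_2 => if j == ord0 then x i else y i].
have Mxy i : @rmem _ (rel2 r) (M i) by rewrite /= !ffunE; apply: rxy.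
have := fr _ Mxy; rewrite /= !ffunE.
by congr (r (f _) (f _)); apply/ffunP=> i; rewrite !ffunE.
Qed.

Lemma preserves_brel_rel2 n (f : op T n) L (r : rel T) :
  (forall a b : T, brel_mem N L a b = r a b) -> preserves_brel f L <-> preserves f (rel2 r).
Proof.
move=> Lr; rewrite preserves_rel2P /preserves_brel.
split=> fL x y xy.
- by rewrite -Lr; apply: fL => i; rewrite Lr; apply: xy.
- by rewrite Lr; apply: fL => i; rewrite -Lr; apply: xy.
Qed.

Lemma preserves_brel_of n (f : op T n) (F : nat -> nat -> bool) :
  preserves_brel f (brel_of N F) <-> preserves f (rel2 (fun a b : T => F a b)).
Proof. by apply: preserves_brel_rel2 => a b; rewrite brel_mem_of. Qed.

Definition preserves_inv2 (C : opset T) n (f : op T n) : Prop :=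
  forall L, size L = N * N -> clone_preserves_brel C L -> preserves_brel f L.

Definition inv2_sub (C : opset T) (Rs : seq (seq bool)) : Prop :=
  forall L, size L = N * N -> clone_preserves_brel C L -> L \in Rs.

Lemma preserves_brel_full n (f : op T n) : preserves_brel f (brel_full N).
Proof. by move=> x y _; rewrite brel_mem_of. Qed.

Lemma preserves_brel_eq n (f : op T n) : preserves_brel f (brel_eq N).
Proof.
move=> x y xy; suff -> : x = y by rewrite brel_mem_of.
by apply/ffunP=> i; have := xy i; rewrite brel_mem_of // => /eqP /val_inj.
Qed.

Lemma preserves_brel_diag n (f : op T n) (P : pred nat) :
  preserves f (rel1 (fun a : T => P a)) -> preserves_brel f (brel_diag N P).
Proof.
move/preserves_rel1P=> fP x y xy.
have {}xy i : (x i == y i :> nat) && P (x i) by have := xy i; rewrite brel_mem_of.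
have <- : x = y by apply/ffunP=> i; have /andP[/eqP /val_inj] := xy i.
by rewrite brel_mem_of // eqxx fP // => i; have /andP[] := xy i.
Qed.

Lemma preserves_brel_meet n (f : op T n) A B :
  preserves_brel f A -> preserves_brel f B -> preserves_brel f (brel_meet N A B).
Proof.
move=> fA fB x y xy; rewrite brel_mem_of //.
have {}xy i : brel_mem N A (x i) (y i) && brel_mem N B (x i) (y i).
  by have := xy i; rewrite brel_mem_of.
by rewrite fA ?fB // => i; have /andP[] := xy i.
Qed.

Lemma preserves_brel_conv n (f : op T n) A :
  preserves_brel f A -> preserves_brel f (brel_conv N A).
Proof.
by move=> fA x y xy; rewrite brel_mem_of //; apply: fA => i; have := xy i; rewrite brel_mem_of.
Qed.

Lemma preserves_brel_comp n (f : op T n) A B :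
  preserves_brel f A -> preserves_brel f B -> preserves_brel f (brel_comp N A B).
Proof.
move=> fA fB x y xy.
have [z xzy] : exists z : 'I_n -> T,
    forall i, brel_mem N A (x i) (z i) && brel_mem N B (z i) (y i).
  apply: (@fin_all_exists _ (fun=> T) (fun i b => brel_mem N A (x i) b && brel_mem N B b (y i))).
  move=> i; have := xy i; rewrite brel_mem_of // => /hasP[b].
  by rewrite mem_iota => /andP[_ bN] xby; exists (Ordinal bN); exact: xby.
rewrite brel_mem_of //; apply/hasP; exists (nat_of_ord (f (finfun z))).
  by rewrite mem_iota add0n ltn_ord.
by rewrite fA ?fB // => i; rewrite ffunE; have /andP[] := xzy i.
Qed.

Lemma preserves_brel_derive n (f : op T n) Ls ss :
  (forall R, R \in Ls -> preserves_brel f R) ->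
  forall R, R \in derive N Ls ss -> preserves_brel f R.
Proof.
elim: ss Ls => [|s ss IH] Ls fLs //=; apply: IH => R.
rewrite mem_rcons inE => /predU1P[->|]; last exact: fLs.
have fR i : preserves_brel f (nth (brel_full N) Ls i).
  have [iLs|LSi] := ltnP i (size Ls); first by apply: fLs; rewrite mem_nth.
  by rewrite nth_default //; apply: preserves_brel_full.
case: s => [i|i j|i j] /=;
  by [apply: preserves_brel_conv | apply: preserves_brel_meet | apply: preserves_brel_comp].
Qed.

Lemma clone_preserves_derive (C : opset T) Ls ss :
  (forall R, R \in Ls -> clone_preserves_brel C R) ->
  forall R, R \in derive N Ls ss -> clone_preserves_brel C R.
Proof. by move=> CLs R RL n f Cf; apply: preserves_brel_derive RL => R' /CLs; apply. Qed.

End Preservation.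

(** * The Baker-Pixley theorem *)

Definition asbool (P : Prop) : bool := if excluded_middle_informative P then true else false.

Lemma asboolP (P : Prop) : reflect P (asbool P).
Proof. by rewrite /asbool; case: excluded_middle_informative => p; constructor. Qed.

Lemma majority_tup3 (T : finType) (mj : op T 3) (u v w y : T) : is_majority mj ->
  [|| (u == y) && (v == y), (u == y) && (w == y) | (v == y) && (w == y)] ->
  mj (tup3 u v w) = y.
Proof.
move=> mjM /or3P[] /andP[/eqP-> /eqP->].
- by case: (mjM w y) => _ [_ ->].
- by case: (mjM v y) => _ [-> _].
- by case: (mjM u y) => [-> _].
Qed.

Section BakerPixley.
Local Unset Implicit Arguments.
Variables (m : nat) (C : opset 'I_m.+1).
Local Set Implicit Arguments.
Hypotheses (C_clone : is_clone C) (C_majority : has_majority C).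
Local Notation N := m.+1.
Local Notation T := 'I_N.

Lemma clone_interpolates2 n (f : op T n) : preserves_inv2 C f ->
  forall a b : {ffun 'I_n -> T}, exists2 g : op T n, C n g & g a = f a /\ g b = f b.
Proof.
move=> f_inv a b.
(* The relation {(g a, g b) | g in C} is preserved by C and contains the columns of (a, b). *)
pose L := brel_of N (fun u v =>
  asbool (exists2 g : op T n, C n g & (g a : nat) = u /\ (g b : nat) = v)).
have CL : clone_preserves_brel C L.
  move=> k h Ch X Y XY.
  have [G CG] : exists G : 'I_k -> op T n,
      forall i, C n (G i) /\ (G i a : nat) = X i /\ (G i b : nat) = Y i.
    apply: (@fin_all_exists _ (fun=> op T n)
      (fun i g => C n g /\ (g a : nat) = X i /\ (g b : nat) = Y i)) => i.
    by have := XY i; rewrite brel_mem_of // => /asboolP[g]; exists g.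
  rewrite brel_mem_of //; apply/asboolP; exists (Defs.comp h G).
    by apply: C_clone.2 => // i; case: (CG i).
  by rewrite !ffunE; split; congr (nat_of_ord (h _)); apply/ffunP=> i;
    rewrite ffunE; apply: ord_inj; case: (CG i) => _ [ga gb]; rewrite ?ga ?gb.
have abL i : brel_mem N L (a i) (b i).
  by rewrite brel_mem_of //; apply/asboolP; exists (proj T i); [exact: C_clone.1 | rewrite !ffunE].
have := f_inv L (size_brel_of _ _) CL a b abL.
by rewrite brel_mem_of // => /asboolP[g Cg [ga gb]]; exists g => //; split; apply: val_inj.
Qed.

Lemma clone_interpolates n (f : op T n) : 0 < n -> preserves_inv2 C f ->
  forall s : seq {ffun 'I_n -> T}, exists2 g, C n g & {in s, forall x, g x = f x}.
Proof.
move=> n_gt0 f_inv; have interp2 := clone_interpolates2 f_inv.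
have [g0 Cg0] : exists g, C n g by exists (proj T (Ordinal n_gt0)); exact: C_clone.1.
suff {}interp k s : size s <= k -> exists2 g, C n g & {in s, forall x, g x = f x}.
  by move=> s; apply: (interp (size s)).
elim: k s => [|k IH] [|a [|b [|c t]]] //= s_le; try by exists g0.
- by have [g Cg [ga _]] := interp2 a a; exists g => // x; rewrite inE => /eqP->.
- have [g Cg [ga gb]] := interp2 a b.
  by exists g => // x; rewrite !inE => /orP[] /eqP->.
(* Combine by the majority operation three interpolants, each missing one of a, b, c. *)
have [g1 Cg1 g1f] := IH (b :: c :: t) s_le.
have [g2 Cg2 g2f] := IH (a :: c :: t) s_le.
have [g3 Cg3 g3f] := IH (a :: b :: t) s_le.
have [mj [Cmj mjM]] := C_majority.
pose G (i : 'I_3) := if val i == 0 then g1 else if val i == 1 then g2 else g3.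
exists (Defs.comp mj G).
  by apply: C_clone.2 => // i; rewrite /G; case: ifP => _; [|case: ifP].
move=> x sx; rewrite ffunE.
have -> : [ffun i => G i x] = tup3 (g1 x) (g2 x) (g3 x).
  by apply/ffunP=> i; rewrite ffunE /tup3 ffunE /G; case: i => [[|[|[|]]] ?].
apply: majority_tup3 => //.
have E1 : x \in b :: c :: t -> g1 x == f x by move/g1f->.
have E2 : x \in a :: c :: t -> g2 x == f x by move/g2f->.
have E3 : x \in a :: b :: t -> g3 x == f x by move/g3f->.
move: sx; rewrite !inE => /or4P[] /[dup] sx.
- by move/eqP=> ex; subst x; rewrite E2 ?E3 ?inE ?eqxx ?orbT.
- by move/eqP=> ex; subst x; rewrite E1 ?E3 ?inE ?eqxx ?orbT.
- by move/eqP=> ex; subst x; rewrite E1 ?E2 ?inE ?eqxx ?orbT.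
- by move=> _; rewrite E1 ?E2 ?inE ?sx ?orbT.
Qed.

Theorem baker_pixley n (f : op T n) : 0 < n -> preserves_inv2 C f -> C n f.
Proof.
move=> n_gt0 f_inv; have [g Cg gf] := clone_interpolates n_gt0 f_inv (enum {ffun 'I_n -> T}).
by suff -> : f = g by []; apply/ffunP=> x; rewrite gf // mem_enum.
Qed.

End BakerPixley.

Definition rectangular (N : nat) (L : seq bool) : bool :=
  all (fun a => all (fun b => all (fun c => all (fun d =>
    brel_mem N L a b && brel_mem N L c b && brel_mem N L c d ==> brel_mem N L a d)
  (iota 0 N)) (iota 0 N)) (iota 0 N)) (iota 0 N).

Lemma malcev_rectangular m (C : opset 'I_m.+1) L :
  malcev C -> clone_preserves_brel C L -> rectangular m.+1 L.
Proof.
case=> d [Cd dM] CL.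
apply/allP=> a; rewrite mem_iota => /andP[_ ha]; apply/allP=> b; rewrite mem_iota => /andP[_ hb].
apply/allP=> c; rewrite mem_iota => /andP[_ hc]; apply/allP=> e; rewrite mem_iota => /andP[_ he].
apply/implyP=> /andP[/andP[ab cb] ce].
have := CL _ d Cd (tup3 (Ordinal ha) (Ordinal hc) (Ordinal hc))
  (tup3 (Ordinal hb) (Ordinal hb) (Ordinal he)).
rewrite (proj1 (dM _ _)) (proj2 (dM _ _)); apply=> i.
by rewrite /tup3 !ffunE; case: i => [[|[|[|]]] ?].
Qed.

(** * Minion homomorphisms given by gadgets *)

Fixpoint tuples (N k : nat) : seq (seq nat) :=
  if k is k'.+1 then [seq a :: w | a <- iota 0 N, w <- tuples N k'] else [:: [::]].

Lemma mem_tuples N w : all (fun a => a < N) w -> w \in tuples N (size w).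
Proof.
elim: w => [|a w IH] //= /andP[ha hw].
by apply/allpairsP; exists (a, w); rewrite /= mem_iota ha IH.
Qed.

(* A gadget (H, G) sends an n-ary operation f on {0, ..., NS-1} to the n-ary
   operation on {0, ..., NT-1} that replaces each argument a by the k-tuple
   H a, applies f coordinatewise and decodes the resulting k-tuple with the
   table G, indexed in base NS with the first digit least significant. Such maps
   commute with minors by construction. *)
Section Gadget.
Variables (ms mt k : nat) (H : nat -> seq nat) (G : seq nat).
Local Notation NS := ms.+1.
Local Notation NT := mt.+1.

Definition gadget_decode (W : seq nat) : nat := nth 0 G (foldr (fun d acc => d + NS * acc) 0 W).

Definition gadget n (f : op 'I_NS n) : op 'I_NT n :=
  [ffun x : {ffun 'I_n -> 'I_NT} =>
     inord (gadget_decode [seq (f [ffun i => inord (nth 0 (H (x i)) j)] : nat) | j <- iota 0 k])].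

Lemma gadget_minor n r (s : 'I_n -> 'I_r) (f : op 'I_NS n) :
  gadget (minor s f) = minor s (gadget f).
Proof.
apply/ffunP=> x; rewrite !ffunE; congr (inord (gadget_decode _)); apply: eq_map => j.
by rewrite ffunE; congr (nat_of_ord (f _)); apply/ffunP=> i; rewrite !ffunE.
Qed.

Definition gadget_wf : bool :=
  all (fun a => all (fun v => v < NS) (H a)) (iota 0 NT) && all (fun v => v < NT) G.

Definition gadget_coord (a b p : nat) : nat :=
  if p < k then nth 0 (H a) p else nth 0 (H b) (p - k).

(* To show that gadget f preserves R when f preserves all relations in Bs:
   for every pair of coordinates p, q, the relations of Bs containing
   (gadget_coord a b p, gadget_coord a b q) for all (a, b) in R constrain the
   values of f in these coordinates; [gadget_check] enumerates all 2k-tuples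
   meeting these constraints and checks that their halves decode into R. *)
Definition forced_pair (R B : seq bool) (p q : nat) : bool :=
  all (fun a => all (fun b => brel_mem NT R a b ==>
    brel_mem NS B (gadget_coord a b p) (gadget_coord a b q)) (iota 0 NT)) (iota 0 NT).

Definition pair_constraint (Bs : seq (seq bool)) (R : seq bool) (p q : nat) : seq bool :=
  foldr (fun B acc => if forced_pair R B p q then brel_meet NS B acc else acc) (brel_full NS) Bs.

Definition constraint_table (Bs : seq (seq bool)) (R : seq bool) : seq (seq (seq bool)) :=
  [seq [seq pair_constraint Bs R p q | q <- iota 0 (k + k)] | p <- iota 0 (k + k)].

Definition meets_table (table : seq (seq (seq bool))) (W : seq nat) : bool :=
  all (fun p => all (fun q => brel_mem NS (nth [::] (nth [::] table p) q) (nth 0 W p) (nth 0 W q))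
    (iota 0 (k + k))) (iota 0 (k + k)).

Definition gadget_check (Bs : seq (seq bool)) (R : seq bool) : bool :=
  let table := constraint_table Bs R in
  all (fun W => meets_table table W ==>
         brel_mem NT R (gadget_decode (take k W)) (gadget_decode (drop k W)))
    (tuples NS (k + k)).

Lemma gadget_decode_lt W : gadget_wf -> gadget_decode W < NT.
Proof.
case/andP=> _ /allP wfG; rewrite /gadget_decode.
set c := foldr _ _ _; have [cG|] := ltnP c (size G); last by move=> ?; rewrite nth_default.
by apply: wfG; rewrite mem_nth.
Qed.

Lemma gadget_coord_lt a b p : gadget_wf -> a < NT -> b < NT -> gadget_coord a b p < NS.
Proof.
case/andP=> /allP wfH _ ha hb.
have H_lt c j : c < NT -> nth 0 (H c) j < NS.
  move=> hc; have [jH|] := ltnP j (size (H c)); last by move=> ?; rewrite nth_default.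
  by apply: (allP (wfH c _)); rewrite ?mem_iota ?mem_nth.
by rewrite /gadget_coord; case: ifP => _; apply: H_lt.
Qed.

Definition gadget_column n (x y : {ffun 'I_n -> 'I_NT}) (p : nat) : {ffun 'I_n -> 'I_NS} :=
  [ffun i => inord (gadget_coord (x i) (y i) p)].

Lemma preserves_pair_constraint n (f : op 'I_NS n) Bs R (x y : {ffun 'I_n -> 'I_NT}) p q :
  gadget_wf -> (forall B, B \in Bs -> preserves_brel f B) ->
  (forall i, brel_mem NT R (x i) (y i)) ->
  brel_mem NS (pair_constraint Bs R p q) (f (gadget_column x y p)) (f (gadget_column x y q)).
Proof.
move=> wf + xyR; elim: Bs => [|B Bs IH] fBs /=; first by rewrite brel_mem_of.
have {}IH := IH (fun B' B'Bs => fBs B' (@mem_behead _ (B :: Bs) B' B'Bs)).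
case: ifP => forced //; rewrite brel_mem_of // IH andbT.
apply: (fBs B (mem_head _ _)) => i; rewrite !ffunE !inordK ?gadget_coord_lt //.
have := allP forced (x i); rewrite mem_iota ltn_ord => /(_ isT) /allP /(_ (y i)).
by rewrite mem_iota ltn_ord => /(_ isT) /implyP; apply.
Qed.

Lemma gadget_preserves n (f : op 'I_NS n) Bs R : gadget_wf ->
  (forall B, B \in Bs -> preserves_brel f B) -> gadget_check Bs R -> preserves_brel (gadget f) R.
Proof.
move=> wf fBs check x y xyR.
pose W := [seq (f (gadget_column x y p) : nat) | p <- iota 0 (k + k)].
have W_tuple : W \in tuples NS (k + k).
  have -> : k + k = size W by rewrite size_map size_iota.
  by apply: mem_tuples; apply/allP=> v /mapP[p _ ->].
have W_meets : meets_table (constraint_table Bs R) W.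
  apply/allP=> p; rewrite mem_iota add0n => /andP[_ hp].
  apply/allP=> q; rewrite mem_iota add0n => /andP[_ hq].
  rewrite !(nth_map 0) ?size_iota // !nth_iota // !add0n.
  exact: preserves_pair_constraint.
move: check; rewrite /gadget_check => /allP /(_ W W_tuple); rewrite W_meets /=.
have iota_split : iota 0 (k + k) = iota 0 k ++ [seq k + j | j <- iota 0 k].
  by rewrite iotaD add0n -{2}(addn0 k) iotaDl.
have -> : take k W = [seq (f [ffun i => inord (nth 0 (H (x i)) j)] : nat) | j <- iota 0 k].
  rewrite /W iota_split map_cat take_size_cat ?size_map ?size_iota //.
  apply/eq_in_map => j; rewrite mem_iota add0n => /andP[_ hj].
  by congr (nat_of_ord (f _)); apply/ffunP=> i; rewrite !ffunE /gadget_coord hj.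
have -> : drop k W = [seq (f [ffun i => inord (nth 0 (H (y i)) j)] : nat) | j <- iota 0 k].
  rewrite /W iota_split map_cat drop_size_cat ?size_map ?size_iota // -map_comp.
  apply: eq_map => j /=; congr (nat_of_ord (f _)); apply/ffunP=> i.
  by rewrite !ffunE /gadget_coord ltnNge leq_addr /= addKn.
by rewrite !ffunE !inordK ?gadget_decode_lt.
Qed.

Lemma gadget_minor_le (Src : opset 'I_NS) (C : opset 'I_NT) Bs Rs :
  is_clone C -> has_majority C -> gadget_wf && all (gadget_check Bs) Rs ->
  (forall n f, Src n f -> 0 < n /\ forall B, B \in Bs -> preserves_brel f B) ->
  inv2_sub C Rs -> minor_le Src C.
Proof.
move=> C_clone C_maj /andP[wf checks] Src_Bs C_Rs; exists gadget; split=> [n f Sf|n r s f _].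
  have [n_gt0 fBs] := Src_Bs n f Sf.
  apply: (baker_pixley C_clone C_maj n_gt0) => L sizeL CL.
  exact: gadget_preserves wf fBs (allP checks L (C_Rs L sizeL CL)).
exact: gadget_minor.
Qed.

End Gadget.

Definition const_brel N k := brel_diag N (pred1 k).
Definition mu2_brel := brel_of 3 (fun a b => (a == 2) == (b == 2)).
Definition rho2_brel := brel_of 3 (fun a b => (a == 2) != (b == 2)).
Definition psi2_brel :=
  brel_of 3 (fun a b => [|| (a == 0) && (b == 1), (a == 1) && (b == 0) | (a == 2) && (b == 2)]).
Definition swap01_brel := brel_of 3 (fun a b => ((a == 0) && (b == 1)) || ((a == 1) && (b == 0))).
Definition not2_brel := brel_diag 3 (fun a => a != 2).
Definition neq2_brel := brel_of 2 (fun a b => a != b).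

Definition base_brels :=
  [:: brel_eq 3; brel_full 3; const_brel 3 0; const_brel 3 1; const_brel 3 2; mu2_brel].
Definition M0_brels := [:: brel_eq 3; brel_full 3; const_brel 3 0; const_brel 3 1;
  const_brel 3 2; psi2_brel; rho2_brel; not2_brel].
Definition M1_brels := [:: brel_eq 3; brel_full 3; const_brel 3 0; const_brel 3 1;
  const_brel 3 2; psi2_brel; mu2_brel].
Definition C2_brels := [:: brel_eq 2; brel_full 2; const_brel 2 0; const_brel 2 1; neq2_brel].
Definition I2_brels := [:: brel_eq 2; brel_full 2; const_brel 2 0; const_brel 2 1].
Definition forbidden_brels := [:: psi2_brel; swap01_brel; rho2_brel].

Fixpoint bool_lists (k : nat) : seq (seq bool) :=
  if k is k'.+1 then [seq b :: l | b <- [:: false; true], l <- bool_lists k'] else [:: [::]].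

Lemma mem_bool_lists l : l \in bool_lists (size l).
Proof. by elim: l => [|b l IH] //=; rewrite !mem_cat; case: b; rewrite map_f ?orbT. Qed.

Definition brel_of_code (N c : nat) : seq bool := mkseq (fun i => odd (c %/ 2 ^ i)) (N * N).

(* The hint tables below, produced by a separate search, give for some relations R
   (by their codes) a derivation from [base_brels] and R that reaches a relation
   excluded in the corresponding case (a non-rectangular one, rho2, or one of
   [forbidden_brels]). Step indices are positions in the growing list of relations. *)
Fixpoint hint (R : seq bool) (table : seq (nat * seq brel_step)) : seq brel_step :=
  if table is (c, ss) :: table' then (if brel_of_code 3 c == R then ss else hint R table')
  else [::].

Fixpoint hint2 (R1 R2 : seq bool) (table : seq (nat * nat * seq brel_step)) : seq brel_step :=
  if table is (c1, c2, ss) :: table' then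
    (if (brel_of_code 3 c1 == R1) && (brel_of_code 3 c2 == R2) then ss else hint2 R1 R2 table')
  else [::].

Definition brels_mu2 := map (brel_of_code 3)
  [:: 0; 1; 2; 3; 4; 5; 6; 7; 8; 9; 10; 12; 16; 17; 18; 20; 24; 27; 28; 32; 33; 34; 35; 36; 40;
    45; 48; 54; 56; 63; 64; 65; 66; 68; 72; 73; 80; 82; 96; 100; 128; 129; 130; 132; 136; 137; 144;
    146; 160; 164; 192; 195; 196; 216; 219; 224; 228; 256; 257; 258; 259; 260; 264; 265; 266; 272;
    273; 274; 280; 283; 288; 292; 320; 325; 360; 365; 384; 390; 432; 438; 448; 455; 504; 511].

Definition brels_psi := map (brel_of_code 3)
  [:: 0; 1; 2; 3; 4; 5; 6; 7; 8; 9; 10; 16; 17; 18; 24; 27; 32; 36; 40; 45; 48; 54; 56; 63; 64;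
    65; 72; 73; 128; 130; 144; 146; 192; 195; 216; 219; 256; 257; 258; 259; 260; 264; 265; 266; 272;
    273; 274; 280; 283; 288; 292; 320; 325; 360; 365; 384; 390; 432; 438; 448; 455; 504; 511].

Definition brels_I2 := map (brel_of_code 3)
  [:: 0; 1; 2; 3; 4; 5; 6; 7; 8; 9; 12; 16; 17; 18; 20; 24; 27; 28; 32; 33; 34; 35; 36; 40; 45;
    48; 54; 56; 63; 64; 65; 66; 72; 73; 80; 82; 128; 129; 130; 136; 137; 144; 146; 192; 195; 216;
    219; 256; 257; 258; 259; 260; 264; 265; 272; 273; 274; 280; 283; 288; 292; 320; 325; 360; 365;
    384; 390; 432; 438; 448; 455; 504; 511].

Definition brels_I2a := map (brel_of_code 3)
  [:: 0; 1; 2; 3; 4; 5; 6; 7; 8; 9; 16; 17; 18; 24; 27; 32; 33; 34; 35; 36; 40; 45; 48; 54; 56;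
    63; 64; 65; 72; 73; 128; 129; 130; 136; 137; 144; 146; 192; 195; 216; 219; 256; 257; 258; 259;
    260; 264; 265; 272; 273; 274; 280; 283; 288; 292; 320; 325; 360; 365; 384; 390; 432; 438; 448;
    455; 504; 511].

Definition brels_I2b := map (brel_of_code 3)
  [:: 0; 1; 2; 3; 4; 5; 6; 7; 8; 9; 12; 16; 17; 18; 20; 24; 27; 28; 32; 36; 40; 45; 48; 54; 56;
    63; 64; 65; 66; 72; 73; 80; 82; 128; 130; 144; 146; 192; 195; 216; 219; 256; 257; 258; 259; 260;
    264; 265; 272; 273; 274; 280; 283; 288; 292; 320; 325; 360; 365; 384; 390; 432; 438; 448; 455;
    504; 511].

Definition hints_mu2 : seq (nat * seq brel_step) :=
  [:: (14, [:: Comp 6 5]);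
   (21, [:: Comp 6 5]);
   (42, [:: Comp 6 5]);
   (49, [:: Comp 6 5]);
   (70, [:: Comp 6 5]);
   (74, [:: Comp 5 6]);
   (76, [:: Comp 5 6]);
   (78, [:: Comp 5 6]);
   (81, [:: Comp 5 6]);
   (84, [:: Comp 6 5; Comp 5 7]);
   (97, [:: Comp 5 6]);
   (98, [:: Comp 6 5; Comp 5 7]);
   (112, [:: Comp 6 5]);
   (113, [:: Comp 5 6]);
   (118, [:: Comp 6 5]);
   (133, [:: Comp 6 5]);
   (138, [:: Comp 5 6]);
   (140, [:: Comp 6 5; Comp 5 7]);
   (145, [:: Comp 5 6]);
   (148, [:: Comp 5 6]);
   (149, [:: Comp 5 6]);
   (161, [:: Comp 6 5; Comp 5 7]);
   (162, [:: Comp 5 6]);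
   (168, [:: Comp 6 5]);
   (170, [:: Comp 5 6]);
   (173, [:: Comp 6 5]);
   (220, [:: Comp 5 6]);
   (227, [:: Comp 5 6]);
   (268, [:: Comp 5 6]);
   (276, [:: Comp 5 6]);
   (284, [:: Comp 5 6]);
   (289, [:: Comp 5 6]);
   (290, [:: Comp 5 6]);
   (291, [:: Comp 5 6]);
   (322, [:: Comp 6 5]);
   (336, [:: Comp 6 5]);
   (338, [:: Comp 6 5]);
   (341, [:: Comp 5 6]);
   (362, [:: Comp 5 6]);
   (385, [:: Comp 6 5]);
   (392, [:: Comp 6 5]);
   (393, [:: Comp 6 5]);
   (398, [:: Comp 5 6]);
   (433, [:: Comp 5 6])].

Definition hints_psi : seq (nat * seq brel_step) :=
  [:: (12, [:: Conv 7; Comp 5 8; Comp 7 5; Comp 6 10; Comp 9 11]);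
   (20, [:: Conv 7; Comp 5 8; Comp 7 5; Comp 6 10; Comp 9 11]);
   (28, [:: Conv 7; Comp 6 7; Comp 8 9]);
   (33, [:: Conv 7; Comp 5 8; Comp 7 5; Comp 6 10; Comp 9 11]);
   (34, [:: Conv 7; Comp 5 8; Comp 7 5; Comp 6 10; Comp 9 11]);
   (35, [:: Conv 7; Comp 6 7; Comp 8 9]);
   (66, [:: Comp 7 6; Comp 5 8; Comp 5 7; Conv 10; Comp 9 11]);
   (68, [:: Comp 7 5; Comp 5 8]);
   (80, [:: Comp 7 6; Comp 5 8; Comp 5 7; Conv 10; Comp 9 11]);
   (82, [:: Comp 7 6; Conv 7; Comp 8 9]);
   (96, [:: Comp 7 5; Comp 5 8]);
   (100, [:: Comp 7 5]);
   (129, [:: Comp 7 6; Comp 5 8; Comp 5 7; Conv 10; Comp 9 11]);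
   (132, [:: Comp 7 5; Comp 5 8]);
   (136, [:: Comp 7 6; Comp 5 8; Comp 5 7; Conv 10; Comp 9 11]);
   (137, [:: Comp 7 6; Conv 7; Comp 8 9]);
   (160, [:: Comp 7 5; Comp 5 8]);
   (164, [:: Comp 7 5]);
   (196, [:: Comp 5 7]);
   (224, [:: Comp 5 7]);
   (228, [:: ])].

Definition hints_I2 : seq (nat * seq brel_step) :=
  [:: (10, [:: ]);
   (68, [:: Comp 6 5; Comp 5 7]);
   (96, [:: Comp 6 5; Comp 5 7]);
   (100, [:: Comp 6 5]);
   (132, [:: Comp 6 5; Comp 5 7]);
   (160, [:: Comp 6 5; Comp 5 7]);
   (164, [:: Comp 6 5]);
   (196, [:: Comp 5 6]);
   (224, [:: Comp 5 6]);
   (228, [:: ])].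

Definition hints_I2_pairs : seq (nat * nat * seq brel_step) :=
  [:: (12, 33, [:: Conv 7; Comp 6 8]);
   (12, 34, [:: Comp 6 5; Conv 7; Comp 8 9]);
   (12, 35, [:: Conv 7; Comp 6 8]);
   (12, 129, [:: Comp 6 7]);
   (12, 136, [:: Comp 5 7; Comp 6 8]);
   (12, 137, [:: Comp 6 7]);
   (20, 33, [:: Comp 6 5; Conv 7; Comp 8 9]);
   (20, 34, [:: Conv 7; Comp 6 8]);
   (20, 35, [:: Conv 7; Comp 6 8]);
   (20, 129, [:: Comp 5 7; Comp 6 8]);
   (20, 136, [:: Comp 6 7]);
   (20, 137, [:: Comp 6 7]);
   (28, 33, [:: Conv 7; Comp 6 8]);
   (28, 34, [:: Conv 7; Comp 6 8]);
   (28, 35, [:: Conv 7; Comp 6 8]);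
   (28, 129, [:: Comp 6 7]);
   (28, 136, [:: Comp 6 7]);
   (28, 137, [:: Comp 6 7]);
   (66, 33, [:: Comp 7 6]);
   (66, 34, [:: Comp 5 6; Comp 7 8]);
   (66, 35, [:: Comp 7 6]);
   (66, 129, [:: Conv 6; Comp 8 7]);
   (66, 136, [:: Conv 6; Comp 5 7; Comp 8 9]);
   (66, 137, [:: Comp 5 6; Conv 7; Comp 8 9]);
   (80, 33, [:: Comp 5 6; Comp 7 8]);
   (80, 34, [:: Comp 7 6]);
   (80, 35, [:: Comp 7 6]);
   (80, 129, [:: Conv 6; Comp 5 7; Comp 8 9]);
   (80, 136, [:: Conv 6; Comp 8 7]);
   (80, 137, [:: Comp 5 6; Conv 7; Comp 8 9]);
   (82, 33, [:: Comp 7 6]);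
   (82, 34, [:: Comp 7 6]);
   (82, 35, [:: Comp 6 7]);
   (82, 129, [:: Comp 5 7; Conv 6; Comp 8 9]);
   (82, 136, [:: Comp 5 7; Conv 6; Comp 8 9]);
   (82, 137, [:: Conv 7; Comp 6 8])].

Definition M0_derived := derive 3 M0_brels
  [:: Comp 1 2; Comp 1 3; Comp 1 4; Comp 1 7; Comp 2 1; Comp 2 5; Comp 2 6; Comp 3 1; Comp 3 5;
    Comp 3 6; Comp 4 1; Comp 4 6; Comp 5 7; Comp 6 2; Comp 6 3; Comp 6 4; Comp 6 6; Comp 7 1;
    Comp 2 11; Comp 3 11; Comp 6 19; Comp 6 21; Comp 6 22].

Definition M1_derived := derive 3 M1_brels
  [:: Comp 1 2; Comp 1 3; Comp 1 4; Comp 2 1; Comp 2 5; Comp 2 6; Comp 3 1; Comp 3 5; Comp 3 6;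
    Comp 4 1; Comp 6 2; Comp 6 3; Comp 1 12; Comp 2 9; Comp 3 9; Comp 4 7; Comp 4 8; Comp 6 10;
    Comp 6 12; Comp 16 12; Comp 17 9; Meet 0 19; Meet 5 19].

Definition C2_derived := derive 2 C2_brels
  [:: Comp 1 2; Comp 1 3; Comp 2 1; Comp 2 4; Comp 3 1; Comp 3 4].

Definition I2_derived := derive 2 I2_brels
  [:: Comp 1 2; Comp 1 3; Comp 2 1; Comp 3 1; Comp 2 5; Comp 3 4].

Definition H_M0 (a : nat) : seq nat :=
  nth [::] [:: [:: 0; 0; 0; 0]; [:: 1; 2; 2; 0]; [:: 2; 0; 2; 2]] a.
Definition G_M0 :=
  [:: 0; 0; 2; 0; 0; 2; 0; 1; 2; 0; 0; 2; 0; 0; 2; 0; 1; 2; 0; 1; 2; 0; 1; 2; 1; 1; 2; 0; 0; 2; 0;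
    0; 2; 1; 0; 2; 0; 0; 2; 0; 0; 2; 1; 0; 2; 1; 0; 2; 1; 0; 2; 1; 1; 2; 0; 0; 2; 0; 0; 2; 0; 0;
    2; 0; 0; 2; 0; 0; 2; 0; 0; 2; 0; 0; 2; 0; 0; 2; 1; 1; 2].

Definition H_M1 (a : nat) : seq nat := nth [::] [:: [:: 0; 0]; [:: 1; 0]; [:: 2; 2]] a.
Definition G_M1 := [:: 0; 1; 2; 1; 0; 2; 0; 0; 2].

Definition H_C2 (a : nat) : seq nat := nth [::] [:: [:: 0; 0; 0]; [:: 0; 1; 1]; [:: 1; 0; 1]] a.
Definition G_C2 := [:: 0; 2; 0; 2; 0; 2; 1; 2].

Definition H_I2a (a : nat) : seq nat := nth [::] [:: [:: 0; 0]; [:: 0; 1]; [:: 1; 1]] a.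
Definition G_I2a := [:: 0; 2; 1; 2].

Definition H_I2b (a : nat) : seq nat := nth [::] [:: [:: 0; 1]; [:: 0; 0]; [:: 1; 1]] a.
Definition G_I2b := [:: 1; 2; 0; 2].

Definition brels_not_psi := [seq R <- brels_mu2 | R != psi2_brel].

Lemma brels_mu2_complete :
  all (fun R => [|| R \in brels_mu2, ~~ rectangular 3 R |
    has (fun X => ~~ rectangular 3 X) (derive 3 (base_brels ++ [:: R]) (hint R hints_mu2))])
  (bool_lists 9).
Proof. by vm_compute. Qed.

Lemma brels_psi_complete :
  all (fun R => (R \in brels_psi) ||
    (rho2_brel \in derive 3 (base_brels ++ [:: psi2_brel; R]) (hint R hints_psi)))
  brels_mu2.
Proof. by vm_compute. Qed.

Lemma brels_I2_complete :
  all (fun R => [|| R == psi2_brel, R \in brels_I2 |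
    has (mem forbidden_brels) (derive 3 (base_brels ++ [:: R]) (hint R hints_I2))])
  brels_mu2.
Proof. by vm_compute. Qed.

Lemma brels_I2_split :
  all (fun R1 => all (fun R2 => [|| R1 \in brels_I2a, R2 \in brels_I2b |
    has (mem forbidden_brels) (derive 3 (base_brels ++ [:: R1; R2]) (hint2 R1 R2 hints_I2_pairs))])
  brels_I2) brels_I2.
Proof. by vm_compute. Qed.

Lemma gadget_M0_ok :
  gadget_wf 2 2 H_M0 G_M0 && all (gadget_check 2 2 4 H_M0 G_M0 M0_derived) brels_mu2.
Proof. by vm_compute. Qed.

Lemma gadget_M1_ok :
  gadget_wf 2 2 H_M1 G_M1 && all (gadget_check 2 2 2 H_M1 G_M1 M1_derived) brels_psi.
Proof. by vm_compute. Qed.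

Lemma gadget_C2_ok :
  gadget_wf 1 2 H_C2 G_C2 && all (gadget_check 1 2 3 H_C2 G_C2 C2_derived) brels_not_psi.
Proof. by vm_compute. Qed.

Lemma gadget_I2a_ok :
  gadget_wf 1 2 H_I2a G_I2a && all (gadget_check 1 2 2 H_I2a G_I2a I2_derived) brels_I2a.
Proof. by vm_compute. Qed.

Lemma gadget_I2b_ok :
  gadget_wf 1 2 H_I2b G_I2b && all (gadget_check 1 2 2 H_I2b G_I2b I2_derived) brels_I2b.
Proof. by vm_compute. Qed.

(** * Binary invariants of the clone C *)

Definition swap01 : relation 'I_3 :=
  rel2 (fun x y : 'I_3 => ((val x == 0) && (val y == 1)) || ((val x == 1) && (val y == 0))).

Lemma idempotent_arity_gt0 m n (f : op 'I_m.+2 n) : (forall x, f [ffun _ => x] = x) -> 0 < n.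
Proof.
case: n f => // f f_idem.
have e : [ffun _ : 'I_0 => (ord0 : 'I_m.+2)] = [ffun _ => ord_max] by apply/ffunP=> [[]].
by have := f_idem ord0; rewrite e f_idem.
Qed.

Lemma idempotent_preserves_const m n (f : op 'I_m.+2 n) k :
  (forall x, f [ffun _ => x] = x) -> preserves f (rel1 (fun a : 'I_m.+2 => val a == k)).
Proof.
move=> f_idem; apply/preserves_rel1P => x xk; have n_gt0 := idempotent_arity_gt0 f_idem.
suff -> : x = [ffun _ => x (Ordinal n_gt0)] by rewrite f_idem.
by apply/ffunP=> i; rewrite ffunE; apply: ord_inj; rewrite (eqP (xk i)) (eqP (xk _)).
Qed.

Lemma idempotent_mu2_not2 n (f : op 'I_3 n) : (forall x, f [ffun _ => x] = x) ->
  preserves f mu2 -> forall x : {ffun 'I_n -> 'I_3}, (forall i, val (x i) != 2) -> val (f x) != 2.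
Proof.
move=> f_idem /preserves_rel2P f_mu2 x x_not2.
have := f_mu2 x [ffun _ => ord0]; rewrite f_idem /= eqbF_neg; apply=> i.
by rewrite ffunE /= eqbF_neg x_not2.
Qed.

Lemma clone_preserves_brelP m (C : opset 'I_m.+1) L R :
  (forall n (f : op 'I_m.+1 n), preserves_brel f L <-> preserves f R) ->
  clone_preserves_brel C L <-> clone_preserves C R.
Proof. by move=> LR; split=> CL n f Cf; apply/LR; apply: CL. Qed.

Lemma preserves_mu2_brel n (f : op 'I_3 n) : preserves_brel f mu2_brel <-> preserves f mu2.
Proof. exact: preserves_brel_of. Qed.

Lemma preserves_rho2_brel n (f : op 'I_3 n) : preserves_brel f rho2_brel <-> preserves f rho2.
Proof. exact: preserves_brel_of. Qed.

Lemma preserves_psi2_brel n (f : op 'I_3 n) : preserves_brel f psi2_brel <-> preserves f psi2.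
Proof. exact: preserves_brel_of. Qed.

Lemma preserves_swap01_brel n (f : op 'I_3 n) : preserves_brel f swap01_brel <-> preserves f swap01.
Proof. exact: preserves_brel_of. Qed.

Lemma forbidden_preserved (C : opset 'I_3) X : X \in forbidden_brels -> clone_preserves_brel C X ->
  [\/ clone_preserves C psi2, clone_preserves C swap01 | clone_preserves C rho2].
Proof.
rewrite !inE => /or3P[] /eqP->.
- by move/(clone_preserves_brelP _ preserves_psi2_brel); apply: Or31.
- by move/(clone_preserves_brelP _ preserves_swap01_brel); apply: Or32.
- by move/(clone_preserves_brelP _ preserves_rho2_brel); apply: Or33.
Qed.

Section BinaryInvariants.
Variable C : opset 'I_3.
Hypotheses (C_idem : idempotent_clone C) (C_malcev : malcev C) (C_mu2 : clone_preserves C mu2).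

Lemma base_brels_preserved R : R \in base_brels -> clone_preserves_brel C R.
Proof.
rewrite !inE => /or4P[|||/or3P[]] /eqP-> n f Cf;
  try by apply: preserves_brel_diag; apply: idempotent_preserves_const; apply: C_idem Cf.
- exact: preserves_brel_eq.
- exact: preserves_brel_full.
- by apply/preserves_mu2_brel; apply: C_mu2.
Qed.

Lemma extension_preserved Rs ss :
  (forall R, R \in Rs -> clone_preserves_brel C R) ->
  forall X, X \in derive 3 (base_brels ++ Rs) ss -> clone_preserves_brel C X.
Proof.
move=> CRs; apply: clone_preserves_derive => X; rewrite mem_cat => /orP[].
  exact: base_brels_preserved.
exact: CRs.
Qed.

Lemma inv2_brels_mu2 : inv2_sub C brels_mu2.
Proof.
move=> L sizeL CL; have L_all : L \in bool_lists 9 by rewrite -[9]/(3 * 3) -sizeL mem_bool_lists.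
case/or3P: (allP brels_mu2_complete L L_all) => [//| | /hasP[X]].
  by rewrite (malcev_rectangular C_malcev CL).
move=> /(extension_preserved _) CX; rewrite (malcev_rectangular C_malcev (CX _)) //.
by move=> R; rewrite inE => /eqP->.
Qed.

Lemma inv2_brels_psi : clone_preserves C psi2 -> ~ clone_preserves C rho2 -> inv2_sub C brels_psi.
Proof.
move=> C_psi C_rho L sizeL CL.
case/orP: (allP brels_psi_complete L (inv2_brels_mu2 sizeL CL)) => // rho_derived.
case: C_rho; apply/(clone_preserves_brelP _ preserves_rho2_brel).
apply: extension_preserved rho_derived => R; rewrite !inE => /orP[] /eqP-> //.
exact/(clone_preserves_brelP _ preserves_psi2_brel).
Qed.

Lemma inv2_brels_not_psi : ~ clone_preserves C psi2 -> inv2_sub C brels_not_psi.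
Proof.
move=> C_psi L sizeL CL; rewrite mem_filter (inv2_brels_mu2 sizeL CL) andbT.
by apply/eqP=> LE; apply: C_psi; apply/(clone_preserves_brelP _ preserves_psi2_brel); rewrite -LE.
Qed.

Hypotheses (C_psi : ~ clone_preserves C psi2) (C_swap01 : ~ clone_preserves C swap01)
  (C_rho : ~ clone_preserves C rho2).

Lemma derived_not_forbidden Rs ss X :
  (forall R, R \in Rs -> clone_preserves_brel C R) ->
  X \in derive 3 (base_brels ++ Rs) ss -> X \notin forbidden_brels.
Proof.
move=> CRs XD; apply/negP=> /forbidden_preserved /(_ (extension_preserved CRs XD)).
by case=> ?; [case: C_psi | case: C_swap01 | case: C_rho].
Qed.

Lemma inv2_brels_I2 : inv2_sub C brels_I2.
Proof.
move=> L sizeL CL.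
case/or3P: (allP brels_I2_complete L (inv2_brels_mu2 sizeL CL)) => [/eqP LE|//|/hasP[X XD XF]].
  by case: C_psi; apply/(clone_preserves_brelP _ preserves_psi2_brel); rewrite -LE.
have CLs R : R \in [:: L] -> clone_preserves_brel C R by rewrite inE => /eqP->.
by case/negP: (derived_not_forbidden CLs XD); exact: XF.
Qed.

Lemma inv2_brels_I2_split : inv2_sub C brels_I2a \/ inv2_sub C brels_I2b.
Proof.
case: (classic (inv2_sub C brels_I2a)) => [|not_a]; [by left | right].
move=> L2 size2 C2; apply/negPn/negP => L2b; apply: not_a => L1 size1 C1.
apply/negPn/negP => L1a.
have := allP (allP brels_I2_split L1 (inv2_brels_I2 size1 C1)) L2 (inv2_brels_I2 size2 C2).
rewrite (negbTE L1a) (negbTE L2b) /= => /hasP[X XD XF].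
have CLs R : R \in [:: L1; L2] -> clone_preserves_brel C R by rewrite !inE => /orP[] /eqP->.
by case/negP: (derived_not_forbidden CLs XD); exact: XF.
Qed.

End BinaryInvariants.

Lemma Pol_cons (T : finType) (R : relation T) Gamma n (f : op T n) :
  Pol (R :: Gamma) f <-> preserves f R /\ Pol Gamma f.
Proof.
split=> [fRG | [fR fG] R' /= [<-|]] //; last exact: fG.
by split=> [|R' R'G]; apply: fRG; [left | right].
Qed.

Lemma const_arity_gt0 m n (f : op 'I_m.+2 n) :
  preserves f (rel1 (fun a : 'I_m.+2 => val a == 0)) ->
  preserves f (rel1 (fun a : 'I_m.+2 => val a == 1)) -> 0 < n.
Proof.
case: n f => // f /preserves_rel1P f0 /preserves_rel1P f1.
have no_arg (i : 'I_0) : False by case: i.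
have := f0 [ffun => ord0] (fun i => match no_arg i with end).
by rewrite (eqP (f1 _ (fun i => match no_arg i with end))).
Qed.

Lemma preserves_brel_all m n (f : op 'I_m.+1 n) (Bs : seq (seq bool)) :
  foldr (fun B acc => preserves_brel f B /\ acc) True Bs ->
  forall B, B \in Bs -> preserves_brel f B.
Proof.
elim: Bs => //= B0 Bs IH [fB0 fBs] B; rewrite inE => /predU1P[->|] //; exact: IH.
Qed.

Lemma PolM0_derived n (f : op 'I_3 n) :
  Pol M0 f -> 0 < n /\ forall B, B \in M0_derived -> preserves_brel f B.
Proof.
case/Pol_cons=> f_psi /Pol_cons[f_rho /Pol_cons[f_not2 f_consts]].
case/Pol_cons: f_consts => f0 /Pol_cons[f1 /Pol_cons[f2 _]].
split; first exact: const_arity_gt0 f0 f1.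
apply: preserves_brel_derive; apply: preserves_brel_all => /=.
do !split; try exact: preserves_brel_diag.
- exact: preserves_brel_eq.
- exact: preserves_brel_full.
- exact/preserves_psi2_brel.
- exact/preserves_rho2_brel.
Qed.

Lemma PolM1_derived n (f : op 'I_3 n) :
  Pol M1 f -> 0 < n /\ forall B, B \in M1_derived -> preserves_brel f B.
Proof.
case/Pol_cons=> f_psi /Pol_cons[f_mu /Pol_cons[f0 /Pol_cons[f1 /Pol_cons[f2 _]]]].
split; first exact: const_arity_gt0 f0 f1.
apply: preserves_brel_derive; apply: preserves_brel_all => /=.
do !split; try exact: preserves_brel_diag.
- exact: preserves_brel_eq.
- exact: preserves_brel_full.
- exact/preserves_psi2_brel.
- exact/preserves_mu2_brel.
Qed.

Lemma C2_derived_preserved n (f : op 'I_2 n) :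
  C2 f -> 0 < n /\ forall B, B \in C2_derived -> preserves_brel f B.
Proof.
case/Pol_cons=> f_neq /Pol_cons[f0 /Pol_cons[f1 _]].
split; first exact: const_arity_gt0 f0 f1.
apply: preserves_brel_derive; apply: preserves_brel_all => /=.
do !split; try exact: preserves_brel_diag.
- exact: preserves_brel_eq.
- exact: preserves_brel_full.
- have neq2E (a b : 'I_2) : brel_mem 2 neq2_brel a b = (a != b) by rewrite brel_mem_of.
  exact/(preserves_brel_rel2 _ neq2E).
Qed.

Lemma I2_derived_preserved n (f : op 'I_2 n) :
  I2 f -> 0 < n /\ forall B, B \in I2_derived -> preserves_brel f B.
Proof.
case/Pol_cons=> f0 /Pol_cons[f1 _].
split; first exact: const_arity_gt0 f0 f1.
apply: preserves_brel_derive; apply: preserves_brel_all => /=.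
do !split; try exact: preserves_brel_diag.
- exact: preserves_brel_eq.
- exact: preserves_brel_full.
Qed.

Lemma minor_le_sub (A : finType) (C D : opset A) :
  (forall n (f : op A n), C n f -> D n f) -> minor_le C D.
Proof. by move=> CD; exists (fun n f => f); split. Qed.

Lemma minor_le_trans (A B D : finType) (X : opset A) (Y : opset B) (Z : opset D) :
  minor_le X Y -> minor_le Y Z -> minor_le X Z.
Proof.
move=> [xi [xiXY xi_minor]] [ze [zeYZ ze_minor]]; exists (fun n f => ze n (xi n f)).
split=> [n f Xf | n r s f Xf]; first by apply: zeYZ; apply: xiXY.
by rewrite xi_minor // ze_minor //; apply: xiXY.
Qed.

Lemma clone_sub_PolM1 (C : opset 'I_3) : idempotent_clone C -> clone_preserves C mu2 ->
  clone_preserves C psi2 -> forall n (f : op 'I_3 n), C n f -> Pol M1 f.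
Proof.
move=> C_idem C_mu C_psi n f Cf; have f_idem := C_idem n f Cf.
repeat (apply/Pol_cons; split); try exact: idempotent_preserves_const _ f_idem.
- exact: C_psi.
- exact: C_mu.
- by [].
Qed.

Lemma clone_sub_PolM0 (C : opset 'I_3) : idempotent_clone C -> clone_preserves C mu2 ->
  clone_preserves C psi2 -> clone_preserves C rho2 -> forall n (f : op 'I_3 n), C n f -> Pol M0 f.
Proof.
move=> C_idem C_mu C_psi C_rho n f Cf; have f_idem := C_idem n f Cf.
repeat (apply/Pol_cons; split); try exact: idempotent_preserves_const _ f_idem.
- exact: C_psi.
- exact: C_rho.
- exact/preserves_rel1P/(idempotent_mu2_not2 f_idem (C_mu n f Cf)).
- by [].
Qed.

Lemma rho2_comp_rho2 : brel_comp 3 rho2_brel rho2_brel = mu2_brel.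
Proof. by vm_compute. Qed.

Lemma PolM0_sub_PolM1 n (f : op 'I_3 n) : Pol M0 f -> Pol M1 f.
Proof.
case/Pol_cons=> f_psi /Pol_cons[f_rho /Pol_cons[_ f_consts]].
do 2 (apply/Pol_cons; split) => //.
apply/preserves_mu2_brel; rewrite -rho2_comp_rho2.
by apply: preserves_brel_comp; apply/preserves_rho2_brel.
Qed.

Lemma C2_sub_I2 n (f : op 'I_2 n) : C2 f -> I2 f.
Proof. by case/Pol_cons. Qed.

Definition bit (b : bool) : 'I_2 := if b then ord_max else ord0.
Definition o0 : 'I_3 := ord0.
Definition o1 : 'I_3 := Ordinal (isT : 1 < 3).
Definition o2 : 'I_3 := ord_max.
Definition swap01_ord (i : 'I_3) : 'I_3 := if val i == 0 then o1 else if val i == 1 then o0 else o2.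

Lemma psi2_swap01 (a b : 'I_3) :
  [|| (val a == 0) && (val b == 1), (val a == 1) && (val b == 0) | (val a == 2) && (val b == 2)]
  = (b == swap01_ord a).
Proof. by case: a => [[|[|[|]]] ?]; case: b => [[|[|[|]]] ?]. Qed.

Lemma preserves_psi2P n (f : op 'I_3 n) :
  preserves f psi2 <->
  forall x : {ffun 'I_n -> 'I_3}, f [ffun i => swap01_ord (x i)] = swap01_ord (f x).
Proof.
rewrite preserves_rel2P; split=> [f_psi x | f_swap x y xy].
  by apply/eqP; rewrite -psi2_swap01; apply: f_psi => i; rewrite psi2_swap01 ffunE.
have -> : y = [ffun i => swap01_ord (x i)].
  by apply/ffunP=> i; rewrite ffunE; apply/eqP; rewrite -psi2_swap01; apply: xy.
by rewrite psi2_swap01 f_swap.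
Qed.

Definition lift02 (c : 'I_2) : 'I_3 := if val c == 1 then o2 else o0.

(* f acting on the classes {0, 1} and {2} of mu2, through their representatives 0 and 2. *)
Definition mu2_quotient n (f : op 'I_3 n) : op 'I_2 n :=
  [ffun c : {ffun 'I_n -> 'I_2} => bit (val (f [ffun i => lift02 (c i)]) == 2)].

Lemma mu2_quotient_minor n r (s : 'I_n -> 'I_r) (f : op 'I_3 n) :
  mu2_quotient (minor s f) = minor s (mu2_quotient f).
Proof.
by apply/ffunP=> c; rewrite !ffunE; congr (bit (val (f _) == 2)); apply/ffunP=> i; rewrite !ffunE.
Qed.

Lemma mu2_quotient_const n (f : op 'I_3 n) k : (forall x, f [ffun _ => x] = x) ->
  preserves (mu2_quotient f) (rel1 (fun x : 'I_2 => val x == k)).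
Proof.
move=> f_idem; apply/preserves_rel1P => c ck; rewrite ffunE.
have n_gt0 : 0 < n := idempotent_arity_gt0 f_idem.
have ck0 := ck (Ordinal n_gt0); have {}ck i : c i = c (Ordinal n_gt0).
  by apply: ord_inj; rewrite (eqP (ck i)) (eqP ck0).
under eq_ffun do rewrite ck; rewrite f_idem.
by move: ck0; case: (c _) => [[|[|]] ?] //= /eqP <-.
Qed.

Lemma idempotent_le_I2 (C : opset 'I_3) : idempotent_clone C -> minor_le C I2.
Proof.
move=> C_idem; exists mu2_quotient.
split=> [n f Cf|]; last by move=> *; apply: mu2_quotient_minor.
rewrite /I2; repeat (apply/Pol_cons; split) => //; exact: mu2_quotient_const _ (C_idem n f Cf).
Qed.

Lemma rho2_le_C2 (C : opset 'I_3) : idempotent_clone C -> clone_preserves C rho2 -> minor_le C C2.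
Proof.
move=> C_idem C_rho; exists mu2_quotient.
split=> [n f Cf|]; last by move=> *; apply: mu2_quotient_minor.
rewrite /C2; repeat (apply/Pol_cons; split) => //; try exact: mu2_quotient_const _ (C_idem n f Cf).
apply/preserves_rel2P => x y xy; rewrite !ffunE.
move/preserves_rel2P: (C_rho n f Cf) => f_rho.
suff : (val (f [ffun i => lift02 (x i)]) == 2) != (val (f [ffun i => lift02 (y i)]) == 2).
  by case: (_ == 2); case: (_ == 2).
apply: f_rho => i; rewrite !ffunE.
by move: (xy i); case: (x i) => [[|[|]] ?]; case: (y i) => [[|[|]] ?].
Qed.

Definition lift01 (c : 'I_2) : 'I_3 := widen_ord (isT : 2 <= 3) c.

(* Values outside {0, 1}, which the clones considered never take there, are read as 0. *)
Definition restrict01 n (f : op 'I_3 n) : op 'I_2 n :=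
  [ffun v : {ffun 'I_n -> 'I_2} => bit (val (f [ffun i => lift01 (v i)]) == 1)].

Lemma restrict01_minor n r (s : 'I_n -> 'I_r) (f : op 'I_3 n) :
  restrict01 (minor s f) = minor s (restrict01 f).
Proof.
by apply/ffunP=> v; rewrite !ffunE; congr (bit (val (f _) == 1)); apply/ffunP=> i; rewrite !ffunE.
Qed.

Lemma swap01_le_C2 (C : opset 'I_3) :
  idempotent_clone C -> clone_preserves C swap01 -> minor_le C C2.
Proof.
move=> C_idem C_swap; exists restrict01.
split=> [n f Cf|]; last by move=> *; apply: restrict01_minor.
have f_idem := C_idem n f Cf; rewrite /C2.
repeat (apply/Pol_cons; split) => //.
- apply/preserves_rel2P => v w vw; rewrite !ffunE.
  move/preserves_rel2P: (C_swap n f Cf) => f_swap.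
  set X := [ffun i => lift01 (v i)]; set Y := [ffun i => lift01 (w i)].
  suff : ((val (f X) == 0) && (val (f Y) == 1)) || ((val (f X) == 1) && (val (f Y) == 0)).
    by case: (f X) => [[|[|[|]]] ?]; case: (f Y) => [[|[|[|]]] ?].
  apply: f_swap => i; rewrite !ffunE.
  by move: (vw i); case: (v i) => [[|[|]] ?]; case: (w i) => [[|[|]] ?].
- apply/preserves_rel1P => v v0; rewrite ffunE.
  suff -> : [ffun i => lift01 (v i)] = [ffun _ => o0] by rewrite f_idem.
  by apply/ffunP=> i; rewrite !ffunE; apply: ord_inj; rewrite /= (eqP (v0 i)).
- apply/preserves_rel1P => v v1; rewrite ffunE.
  suff -> : [ffun i => lift01 (v i)] = [ffun _ => o1] by rewrite f_idem.
  by apply/ffunP=> i; rewrite !ffunE; apply: ord_inj; rewrite /= (eqP (v1 i)).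
Qed.

Lemma PolM1_idempotent : idempotent_clone (Pol M1).
Proof.
move=> n f /Pol_cons[_ /Pol_cons[_ /Pol_cons[f0 /Pol_cons[f1 /Pol_cons[f2 _]]]]] x.
have fx k : preserves f (const3 k) -> val x = k -> f [ffun _ => x] = x.
  move=> /preserves_rel1P fk xk; apply: ord_inj; rewrite xk; apply/eqP/fk => i.
  by rewrite ffunE xk.
by case: x fx => [[|[|[|]]] ?] // fx; [apply: fx f0 _ | apply: fx f1 _ | apply: fx f2 _].
Qed.

Lemma PolM1_le_C2 : minor_le (Pol M1) C2.
Proof.
apply: swap01_le_C2 PolM1_idempotent _ => n f M1f.
have f_idem := PolM1_idempotent M1f.
case/Pol_cons: M1f => /preserves_psi2P f_psi /Pol_cons[f_mu _].
apply/preserves_rel2P => x y xy.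
have fx_not2 : val (f x) != 2.
  by apply: idempotent_mu2_not2 f_idem f_mu _ _ => i; move: (xy i); case: (x i) => [[|[|[|]]] ?].
have -> : y = [ffun i => swap01_ord (x i)].
  apply/ffunP=> i; rewrite ffunE; apply: ord_inj; move: (xy i).
  by case: (x i) => [[|[|[|]]] ?]; case: (y i) => [[|[|[|]]] ?].
by rewrite f_psi; move: fx_not2; case: (f x) => [[|[|[|]]] ?].
Qed.

(** * Separations *)

Definition and2 : op 'I_2 2 :=
  [ffun x : {ffun 'I_2 -> 'I_2} => bit ((val (x ord0) == 1) && (val (x ord_max) == 1))].

Lemma I2_and2 : I2 and2.
Proof.
rewrite /I2; repeat (apply/Pol_cons; split) => //; apply/preserves_rel1P => x xk; rewrite ffunE.
- by rewrite (eqP (xk ord0)).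
- by rewrite (eqP (xk ord0)) (eqP (xk ord_max)).
Qed.

Lemma and2_symmetric : minor (@rev_ord 2) and2 = and2.
Proof.
have rev0 : rev_ord (ord0 : 'I_2) = ord_max by apply: ord_inj.
have rev1 : rev_ord (ord_max : 'I_2) = ord0 by apply: ord_inj.
by apply/ffunP=> x; rewrite !ffunE rev0 rev1 andbC.
Qed.

Lemma C2_not_symmetric (g : op 'I_2 2) : C2 g -> minor (@rev_ord 2) g <> g.
Proof.
case/Pol_cons=> /preserves_rel2P g_neq _ g_sym.
have : g [ffun j => j] != g [ffun j => rev_ord j].
  by apply: g_neq => i; rewrite !ffunE; case: i => [[|[|]] ?].
rewrite -{1}g_sym ffunE.
suff -> : [ffun i => [ffun j => j] (rev_ord i)] = [ffun i : 'I_2 => rev_ord i] by rewrite eqxx.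
by apply/ffunP=> i; rewrite !ffunE.
Qed.

Lemma I2_not_le_C2 : ~ minor_le I2 C2.
Proof.
case=> xi [xi_C2 xi_minor]; apply: (C2_not_symmetric (xi_C2 _ _ I2_and2)).
by rewrite -xi_minor ?and2_symmetric //; exact: I2_and2.
Qed.

Definition bmaj (a b c : bool) : bool := [|| a && b, a && c | b && c].

Definition maj2 : op 'I_2 3 :=
  [ffun x : {ffun 'I_3 -> 'I_2} =>
     bit (bmaj (val (x o0) == 1) (val (x o1) == 1) (val (x o2) == 1))].

Definition collapse01 (i : 'I_3) : 'I_2 := bit (val i == 2).

Lemma C2_maj2 : C2 maj2.
Proof.
rewrite /C2; repeat (apply/Pol_cons; split) => //.
- apply/preserves_rel2P => x y xy; rewrite !ffunE.
  have yx i : (val (y i) == 1) = ~~ (val (x i) == 1).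
    by move: (xy i); case: (x i) => [[|[|]] ?]; case: (y i) => [[|[|]] ?].
  by rewrite !yx; case: (val (x o0) == 1); case: (val (x o1) == 1); case: (val (x o2) == 1).
- by apply/preserves_rel1P => x xk; rewrite ffunE (eqP (xk o0)) (eqP (xk o1)) (eqP (xk o2)).
- by apply/preserves_rel1P => x xk; rewrite ffunE (eqP (xk o0)) (eqP (xk o1)) (eqP (xk o2)).
Qed.

Lemma maj2_swap01 : minor swap01_ord maj2 = maj2.
Proof.
apply/ffunP=> x; rewrite !ffunE /=.
by case: (val (x o0) == 1); case: (val (x o1) == 1); case: (val (x o2) == 1).
Qed.

Lemma maj2_collapse01 : minor collapse01 maj2 = minor (fun _ : 'I_1 => ord0) (proj 'I_2 ord0).
Proof.
apply/ffunP=> x; rewrite !ffunE /collapse01 /=.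
by case: (x ord0) => [[|[|//]] ?]; case: (val (x ord_max) == 1); apply: ord_inj.
Qed.

Lemma PolM1_unary (f : op 'I_3 1) : Pol M1 f -> f = proj 'I_3 ord0.
Proof.
move/PolM1_idempotent=> f_idem; apply/ffunP=> x; rewrite ffunE -[RHS](f_idem (x ord0)).
by congr (f _); apply/ffunP=> i; rewrite ffunE (ord1 i).
Qed.

Lemma swap01_fixed (a : 'I_3) : swap01_ord a = a -> val a = 2.
Proof. by case: a => [[|[|[|]]] ?] // /(congr1 val). Qed.

Lemma preserves_proj (T : finType) n (i : 'I_n) (R : relation T) : preserves (proj T i) R.
Proof.
move=> M MR; suff -> : [ffun j => proj T i [ffun k => M k j]] = M i by [].
by apply/ffunP=> j; rewrite !ffunE.
Qed.

Lemma PolM1_no_weak_majority (g : op 'I_3 3) : Pol M1 g ->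
  g (tup3 o0 o1 o2) = g (tup3 o1 o0 o2) -> g (tup3 o0 o0 o2) = o0 -> False.
Proof.
case/Pol_cons=> /preserves_psi2P g_psi /Pol_cons[/preserves_rel2P g_mu _] g_sym g_collapse.
have g012 : val (g (tup3 o0 o1 o2)) = 2.
  apply: swap01_fixed; rewrite -g_psi g_sym; congr (g _).
  by apply/ffunP=> i; rewrite !ffunE; case: i => [[|[|[|]]] ?].
have : (val (g (tup3 o0 o1 o2)) == 2) == (val (g (tup3 o0 o0 o2)) == 2).
  by apply: g_mu => i; rewrite !ffunE; case: i => [[|[|[|]]] ?].
by rewrite g012 g_collapse.
Qed.

Lemma C2_not_le_PolM1 : ~ minor_le C2 (Pol M1).
Proof.
case=> xi [xi_M1 xi_minor]; set g := xi 3 maj2.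
have C2_proj : C2 (proj 'I_2 (@ord0 0)) by move=> R _; apply: preserves_proj.
have g_sym : minor swap01_ord g = g by rewrite -xi_minor ?maj2_swap01 //; apply: C2_maj2.
have g_collapse : minor collapse01 g = minor (fun _ : 'I_1 => ord0) (proj 'I_3 ord0).
  rewrite -xi_minor ?maj2_collapse01 ?xi_minor ?(PolM1_unary (xi_M1 _ _ C2_proj)) //.
  exact: C2_maj2.
apply: (PolM1_no_weak_majority (xi_M1 _ _ C2_maj2)).
  rewrite -/g -{1}g_sym ffunE; congr (g _).
  by apply/ffunP=> i; rewrite !ffunE; case: i => [[|[|[|]]] ?].
have := congr1 (fun h : op 'I_3 2 => h [ffun i : 'I_2 => if val i == 0 then o0 else o2]) g_collapse.
rewrite !ffunE /= -/g => E; rewrite -[RHS]E; congr (g _).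
by apply/ffunP=> i; rewrite !ffunE; case: i => [[|[|[|]]] ?].
Qed.

Definition idx4 (a b c d : 'I_3) (i : 'I_4) : 'I_3 := nth a [:: a; b; c; d] i.
Definition maj3 (a b c : 'I_3) : 'I_3 := if a == b then a else c.

Definition h4_fun (a b c d : 'I_3) : 'I_3 :=
  if [&& val a != 2, val b != 2, val c != 2 & val d != 2] then maj3 a b c else o2.

Definition h4 : op 'I_3 4 :=
  [ffun x : {ffun 'I_4 -> 'I_3} =>
     h4_fun (x ord0) (x (Ordinal (isT : 1 < 4))) (x (Ordinal (isT : 2 < 4))) (x ord_max)].

Lemma PolM1_h4 : Pol M1 h4.
Proof.
have maj3_not2 a b c : val a != 2 -> val b != 2 -> val c != 2 -> val (maj3 a b c) != 2.
  by rewrite /maj3; case: ifP.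
repeat (apply/Pol_cons; split) => //.
- apply/preserves_psi2P => x; rewrite !ffunE.
  by case: (x _) => [[|[|[|//]]] ?]; case: (x _) => [[|[|[|//]]] ?];
     case: (x _) => [[|[|[|//]]] ?]; case: (x _) => [[|[|[|//]]] ?].
- apply/preserves_rel2P => x y xy; rewrite !ffunE /h4_fun.
  have yx i : (val (y i) != 2) = (val (x i) != 2).
    by move: (xy i); case: (val (x i) == 2); case: (val (y i) == 2).
  rewrite !yx; case: ifP => // /and4P[x0 x1 x2 _].
  rewrite !(negbTE (maj3_not2 _ _ _ _ _ _)) // ?yx //.
all: apply/preserves_rel1P => x xk; rewrite ffunE.
all: have -> : x = [ffun _ => x ord0].
all: try by apply/ffunP=> i; rewrite ffunE; apply: ord_inj; rewrite (eqP (xk i)) (eqP (xk ord0)).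
all: by rewrite !ffunE; case: (x ord0) (xk ord0) => [[|[|[|//]]] ?].
Qed.

Lemma h4_swap01 : minor (idx4 o0 o1 o2 o2) h4 = minor (idx4 o1 o0 o2 o2) h4.
Proof.
apply/ffunP=> x; rewrite !ffunE /idx4 /= /h4_fun /maj3 andbCA.
by rewrite [x o1 == _]eq_sym; case: (x o0 =P x o1) => [->|].
Qed.

Lemma h4_swap23 : minor (idx4 o2 o2 o0 o1) h4 = minor (idx4 o2 o2 o1 o0) h4.
Proof.
apply/ffunP=> x; rewrite !ffunE /idx4 /= /h4_fun /maj3 !eqxx.
by rewrite [in RHS](andbC (_ != 2) (_ != 2)).
Qed.

Lemma PolM0_no_h4_identities (t : op 'I_3 4) : Pol M0 t ->
  minor (idx4 o0 o1 o2 o2) t = minor (idx4 o1 o0 o2 o2) t ->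
  minor (idx4 o2 o2 o0 o1) t = minor (idx4 o2 o2 o1 o0) t -> False.
Proof.
case/Pol_cons=> /preserves_psi2P t_psi /Pol_cons[/preserves_rel2P t_rho _].
have fixed2 (s s' : 'I_4 -> 'I_3) : (forall i, s' i = swap01_ord (s i)) ->
    minor s t = minor s' t -> val (t (finfun s)) = 2.
  move=> ss' /(congr1 (fun h : op 'I_3 3 => h [ffun i => i])); rewrite !ffunE => tss'.
  apply: swap01_fixed; rewrite -t_psi.
  have -> : [ffun i => swap01_ord (finfun s i)] = [ffun i => [ffun j => j] (s' i)].
    by apply/ffunP=> i; rewrite !ffunE ss'.
  by rewrite -tss'; congr (t _); apply/ffunP=> i; rewrite !ffunE.
move=> /fixed2 t1 /fixed2 t2.
have : (val (t (finfun (idx4 o0 o1 o2 o2))) == 2) != (val (t (finfun (idx4 o2 o2 o0 o1))) == 2).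
  by apply: t_rho => i; rewrite !ffunE; case: i => [[|[|[|[|//]]]] ?].
by rewrite t1 ?t2 // => -[[|[|[|[|//]]]] ?].
Qed.

Lemma PolM1_not_le_PolM0 : ~ minor_le (Pol M1) (Pol M0).
Proof.
case=> xi [xi_M0 xi_minor]; apply: (PolM0_no_h4_identities (xi_M0 _ _ PolM1_h4)).
- by rewrite -!xi_minor ?h4_swap01 //; exact: PolM1_h4.
- by rewrite -!xi_minor ?h4_swap23 //; exact: PolM1_h4.
Qed.

Section MainCases.
Variable C : opset 'I_3.
Hypotheses (C_clone : is_clone C) (C_idem : idempotent_clone C) (C_malcev : malcev C)
  (C_maj : has_majority C) (C_mu2 : clone_preserves C mu2).

Lemma classification_not_psi2 :
  ~ clone_preserves C psi2 -> minor_eq C C2 \/ minor_eq C I2.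
Proof.
move=> C_psi.
have C2_le : minor_le C2 C.
  exact: gadget_minor_le C_clone C_maj gadget_C2_ok C2_derived_preserved
    (inv2_brels_not_psi C_idem C_malcev C_mu2 C_psi).
have [C_swap|C_swap] := classic (clone_preserves C swap01).
  by left; split=> //; apply: swap01_le_C2.
have [C_rho|C_rho] := classic (clone_preserves C rho2).
  by left; split=> //; apply: rho2_le_C2.
right; split; first exact: idempotent_le_I2.
case: (inv2_brels_I2_split C_idem C_malcev C_mu2 C_psi C_swap C_rho) => inv2.
- exact: gadget_minor_le C_clone C_maj gadget_I2a_ok I2_derived_preserved inv2.
- exact: gadget_minor_le C_clone C_maj gadget_I2b_ok I2_derived_preserved inv2.
Qed.

Lemma classification_psi2_not_rho2 :
  clone_preserves C psi2 -> ~ clone_preserves C rho2 -> minor_eq C (Pol M1).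
Proof.
move=> C_psi C_rho; split; first exact/minor_le_sub/clone_sub_PolM1.
exact: gadget_minor_le C_clone C_maj gadget_M1_ok PolM1_derived
  (inv2_brels_psi C_idem C_malcev C_mu2 C_psi C_rho).
Qed.

Lemma classification_psi2_rho2 :
  clone_preserves C psi2 -> clone_preserves C rho2 -> minor_eq C (Pol M0).
Proof.
move=> C_psi C_rho; split; first exact/minor_le_sub/clone_sub_PolM0.
exact: gadget_minor_le C_clone C_maj gadget_M0_ok PolM0_derived
  (inv2_brels_mu2 C_idem C_malcev C_mu2).
Qed.

End MainCases.

Theorem theorem6p9 :
  (forall C : opset 'I_3,
      is_clone C -> idempotent_clone C -> malcev C -> has_majority C ->
      clone_preserves C mu2 ->
      (~ clone_preserves C psi2 -> minor_eq C C2 \/ minor_eq C I2) /\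
      (clone_preserves C psi2 -> ~ clone_preserves C rho2 -> minor_eq C (Pol M1)) /\
      (clone_preserves C psi2 -> clone_preserves C rho2 -> minor_eq C (Pol M0))) /\
  (minor_le (Pol M0) (Pol M1) /\ minor_le (Pol M1) C2 /\ minor_le C2 I2) /\
  (~ minor_eq (Pol M0) (Pol M1) /\ ~ minor_eq (Pol M0) C2 /\ ~ minor_eq (Pol M0) I2 /\
   ~ minor_eq (Pol M1) C2 /\ ~ minor_eq (Pol M1) I2 /\ ~ minor_eq C2 I2).
Proof.
have M0_le_M1 : minor_le (Pol M0) (Pol M1) := minor_le_sub PolM0_sub_PolM1.
have C2_le_I2 : minor_le C2 I2 := minor_le_sub C2_sub_I2.
split; [|split].
- move=> C C_clone C_idem C_malcev C_maj C_mu2.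
  split; [|split]; [exact: classification_not_psi2 | exact: classification_psi2_not_rho2
    | exact: classification_psi2_rho2].
- by split; [|split]; [|exact: PolM1_le_C2|].
- have M0_le_C2 := minor_le_trans M0_le_M1 PolM1_le_C2.
  split; first by case=> _; apply: PolM1_not_le_PolM0.
  split; first by case=> _ C2_M0; apply: C2_not_le_PolM1 (minor_le_trans C2_M0 M0_le_M1).
  split; first by case=> _ I2_M0; apply: I2_not_le_C2 (minor_le_trans I2_M0 M0_le_C2).
  split; first by case=> _; apply: C2_not_le_PolM1.
  split; first by case=> _ I2_M1; apply: I2_not_le_C2 (minor_le_trans I2_M1 PolM1_le_C2).
  by case=> _; apply: I2_not_le_C2.
Qed.
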